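(* Let $r\in(0,1)$, let $\vec x=(x_n)_{n\in\mathbb{N}}$ be a complex sequence, and let $L\in\mathbb{C}$. If $\lim_{N\to\infty}\mathbb{E}^{\mathrm{Bin}(r)}_{n\le N}(\vec x)=L$, then $\lim_{N\to\infty}\mathbb{E}^{\mathrm{Bin}(r)}_{n\le N}(T\vec x)=L$. Consequently, for every $k\in\mathbb{N}$, $\lim_{N\to\infty}\mathbb{E}^{\mathrm{Bin}(r)}_{n\le N}(T^k\vec x)=L$.
   Context: $\mathbb{N}=\{0,1,2,\dots\}$. For $r\in(0,1)$, a complex sequence $\vec y=(y_n)_{n\in\mathbb{N}}$ and $N\in\mathbb{N}$, $\mathbb{E}^{\mathrm{Bin}(r)}_{n\le N}(\vec y)=\sum_{n=0}^{N}\binom{N}{n}r^n(1-r)^{N-n}y_n$. $T$ is the right-shift operator: $T(y_0,y_1,y_2,\dots)=(0,y_0,y_1,\dots)$, so $(T^k\vec y)_n=y_{n-k}$ for $n\ge k$ and $0$ for $n<k$. *)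

From HB Require Import structures.
From mathcomp Require Import all_boot all_order all_algebra.
From mathcomp Require Import complex.
From mathcomp Require Import all_classical all_reals all_analysis.
Set Implicit Arguments. Unset Strict Implicit. Unset Printing Implicit Defensive.
Import Order.TTheory GRing.Theory Num.Theory.
Import numFieldTopology.Exports numFieldNormedType.Exports.
Local Open Scope ring_scope.
Local Open Scope complex_scope.

Definition Cplx (R : realType) : numClosedFieldType := R[i].

Definition binomExp (R : realType) (r : R) (y : nat -> Cplx R) (N : nat) : Cplx R :=
  \sum_(n < N.+1) ((('C(N, n))%:R * r ^+ n * (1 - r) ^+ (N - n))%:C * y n).

Definition shiftT (R : realType) (y : nat -> Cplx R) : nat -> Cplx R :=
  fun n => match n with 0%N => 0 | m.+1 => y m end.

(** The binomial averages of [T x] satisfy the convex recursion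
    [B(Tx)_(N+1) = r B(x)_N + (1 - r) B(Tx)_N], which is Pascal's rule
    applied to the binomial weights.  A sequence obeying such a recursion
    with a convergent driving sequence converges to the same limit, since the
    initial discrepancy is damped geometrically by [(1 - r)^k]. *)
From HB Require Import structures.
From mathcomp Require Import all_boot all_order all_algebra.
From mathcomp Require Import complex.
From mathcomp Require Import all_classical all_reals all_analysis.
From mathcomp Require Import ring.
Import Order.TTheory GRing.Theory Num.Theory.
Import numFieldTopology.Exports numFieldNormedType.Exports.
Local Open Scope ring_scope.
Local Open Scope classical_set_scope.
Local Open Scope complex_scope.

Section ConvexRecursion.
Variables (K : numFieldType) (c : K) (a y : nat -> K) (L : K).
Hypotheses (c_gt0 : 0 < c) (c_le1 : c <= 1).
Hypothesis expr_cvg0 : (fun k => (1 - c) ^+ k) @ \oo --> 0.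
Hypothesis y_rec : forall N, y N.+1 = c * a N + (1 - c) * y N.

Lemma convex_recursion_dist_le (e : K) N0 :
  (forall n, (N0 <= n)%N -> `|L - a n| <= e) ->
  forall k, `|L - y (k + N0)%N| <= (1 - c) ^+ k * `|L - y N0| + e.
Proof.
move=> a_close; have q_ge0 : 0 <= 1 - c by rewrite subr_ge0.
elim=> [|k IHk]; first by rewrite expr0 mul1r add0n lerDl (le_trans _ (a_close N0 _)).
rewrite addSn y_rec.
have -> : L - (c * a (k + N0)%N + (1 - c) * y (k + N0)%N)
        = c * (L - a (k + N0)%N) + (1 - c) * (L - y (k + N0)%N) by ring.
apply: le_trans (ler_normD _ _) _; rewrite !normrM (gtr0_norm c_gt0) (ger0_norm q_ge0).
apply: le_trans (lerD (ler_wpM2l (ltW c_gt0) (a_close _ (leq_addl k N0)))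
                      (ler_wpM2l q_ge0 IHk)) _.
by rewrite exprS le_eqVlt; apply/orP; left; apply/eqP; ring.
Qed.

Lemma cvg_convex_recursion : a @ \oo --> L -> y @ \oo --> L.
Proof.
move=> /cvgrPdist_le a_cvg; apply/cvgrPdist_le => e e_gt0.
have e2_gt0 : 0 < e / 2 by rewrite divr_gt0.
have [N0 _ a_close] := a_cvg _ e2_gt0.
have damped : (fun k => (1 - c) ^+ k * `|L - y N0|) @ \oo --> 0.
  by rewrite -(mul0r `|L - y N0|); apply: cvgM => //; apply: cvg_cst.
have [M _ damped_small] := (cvgrPdist_le _ _).1 damped _ e2_gt0.
exists (M + N0)%N => // n /= le_MN0_n.
have le_N0_n : (N0 <= n)%N by apply: leq_trans le_MN0_n; apply: leq_addl.
rewrite -(subnK le_N0_n).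
apply: le_trans (@convex_recursion_dist_le (e / 2) N0 (fun m => @a_close m) _) _.
rewrite [leRHS](splitr e) lerD2r.
have := damped_small (n - N0)%N.
rewrite sub0r normrN ger0_norm ?mulr_ge0 ?exprn_ge0 ?normr_ge0 ?subr_ge0 //.
by apply; rewrite /= leq_subRL // addnC.
Qed.

End ConvexRecursion.

Definition binom_weight {R : comPzRingType} (r : R) (N n : nat) : R :=
  'C(N, n)%:R * r ^+ n * (1 - r) ^+ (N - n).

Lemma binom_weightSS {R : comPzRingType} (r : R) {N n : nat} : (n <= N)%N ->
  binom_weight r N.+1 n.+1 = r * binom_weight r N n + (1 - r) * binom_weight r N n.+1.
Proof.
move=> le_nN; rewrite /binom_weight subSS binS natrD.
case: (ltnP n N) => [lt_nN | le_Nn].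
  by rewrite -(subnSK lt_nN) !exprS; ring.
have -> : n = N by apply/eqP; rewrite eqn_leq le_nN le_Nn.
by rewrite bin_small // subnn !mul0r mulr0 addr0 !exprS; ring.
Qed.

Lemma binomExp_shiftT_succ (R : realType) (r : R) (x : nat -> Cplx R) N :
  binomExp r (shiftT x) N.+1 =
  r%:C * binomExp r x N + (1 - r%:C) * binomExp r (shiftT x) N.
Proof.
rewrite /binomExp big_ord_recl [in X in _ + _ * X]big_ord_recl /= !mulr0 !add0r.
under eq_bigr => i _ do rewrite /bump leq0n add1n add0n.
under [in X in _ + _ * X]eq_bigr => i _ do rewrite /bump leq0n add1n add0n.
rewrite [in X in _ + _ * X](_ : \sum_(i < N) _ =
    \sum_(i < N.+1) (binom_weight r N i.+1)%:C * x i); last first.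
  by rewrite big_ord_recr /= /binom_weight bin_small // !mul0r addr0.
rewrite !mulr_sumr -big_split; apply: eq_bigr => i _ /=.
rewrite -[_ * r ^+ i.+1 * _]/(binom_weight r N.+1 i.+1) binom_weightSS; last by rewrite -ltnS.
by rewrite rmorphD !rmorphM rmorphB rmorph1 /= mulrDl !mulrA.
Qed.

Lemma cvg_expr_complex (R : realType) (q : R) : 0 <= q < 1 ->
  (fun k => q%:C ^+ k : Cplx R) @ \oo --> 0.
Proof.
move=> /andP[q_ge0 q_lt1].
have /cvgrPdist_le q_cvg : (fun k => q ^+ k) @ \oo --> (0 : R).
  by apply: cvg_expr; rewrite ger0_norm.
apply/cvgrPdist_le => e e_gt0.
have e_real : e \is Num.real by apply: gtr0_real.
have Re_e_gt0 : 0 < complex.Re e by rewrite -ltcR RRe_real.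
have [M _ q_small] := q_cvg _ Re_e_gt0.
exists M => // n /= le_Mn.
have := q_small n le_Mn; rewrite /= sub0r normrN ger0_norm ?exprn_ge0 // => qn_le.
rewrite sub0r normrN -rmorphXn ger0_norm ?ler0c ?exprn_ge0 //.
by rewrite -(RRe_real e_real) lecR.
Qed.

Lemma binomExp_shiftT_cvg (R : realType) (r : R) (x : nat -> Cplx R) (L : Cplx R) :
  0 < r < 1 -> binomExp r x @ \oo --> L -> binomExp r (shiftT x) @ \oo --> L.
Proof.
move=> /andP[r_gt0 r_lt1] x_cvg.
apply: (@cvg_convex_recursion _ r%:C (binomExp r x)).
- by rewrite ltcR.
- by rewrite lecR ltW.
- rewrite -(rmorph1 (real_complex R)) -rmorphB.
  apply: cvg_expr_complex; rewrite subr_ge0 ltW //=.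
  by rewrite ltrBlDr ltrDl.
- by move=> N; rewrite binomExp_shiftT_succ.
- exact: x_cvg.
Qed.

Theorem mainTheorem6 (R : realType) (r : R) (x : nat -> Cplx R) (L : Cplx R) :
  (0 < r < 1)%R ->
  binomExp r x @ \oo --> L ->
  binomExp r (shiftT x) @ \oo --> L /\
  (forall k : nat, binomExp r (iter k (@shiftT R) x) @ \oo --> L).
Proof.
move=> r_in01 x_cvg; split; first exact: binomExp_shiftT_cvg.
by elim=> [|k IHk] //=; apply: binomExp_shiftT_cvg.
Qed.
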